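(* In the setting below, suppose $u(s,t,q)=l(s,t)U(q)$, $v(s,t,q)=m(s,t)V(q)$, $w(s,t,q)=n(s,t)W(q)$, $x(s,t,q)=p(s,t)X(q)$ with all factors of class $C^1$, and assume $U(q_0)=U'(q_0)=V(q_0)=V'(q_0)=0$. Then $\mathbf r$ is an isogeodesic of $\mathbf P$ at $(t_0,q_0)$ if and only if for all $s\in[L_1,L_2]$: $$n(s,t_0)W(q_0)=0,\qquad p(s,t_0)X(q_0)=0,$$ $$\frac{\partial n}{\partial t}(s,t_0)\,W(q_0)\,p(s,t_0)\,X'(q_0)-n(s,t_0)\,W'(q_0)\,\frac{\partial p}{\partial t}(s,t_0)\,X(q_0)\neq0.$$
   Context: $\mathbf r:[L_1,L_2]\to\mathbb R^4$ is an arc-length curve with Frenet frame $\{\mathbf T,\mathbf N,\mathbf B_1,\mathbf B_2\}$ (orthonormal, $\mathbf T=\mathbf r'$, $\mathbf T'=k_1\mathbf N$, $\mathbf N'=-k_1\mathbf T+k_2\mathbf B_1$, $\mathbf B_1'=-k_2\mathbf N+k_3\mathbf B_2$, $\mathbf B_2'=-k_3\mathbf B_1$, $k_1>0$), and $\mathbf P(s,t,q)=\mathbf r(s)+u\mathbf T(s)+v\mathbf N(s)+w\mathbf B_1(s)+x\mathbf B_2(s)$ on $[L_1,L_2]\times[T_1,T_2]\times[Q_1,Q_2]$, with $t_0\in[T_1,T_2]$, $q_0\in[Q_1,Q_2]$ fixed. ''$\mathbf r$ is an isogeodesic of $\mathbf P$ at $(t_0,q_0)$'' means: $\mathbf P(s,t_0,q_0)=\mathbf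 r(s)$ for all $s$, $\partial_s\mathbf P,\partial_t\mathbf P,\partial_q\mathbf P$ are linearly independent at $(s,t_0,q_0)$, and $\mathbf N(s)$ is parallel to the normal $\partial_s\mathbf P\otimes\partial_t\mathbf P\otimes\partial_q\mathbf P$ (four-dimensional vector product) at $(s,t_0,q_0)$, for all $s$. *)

From Stdlib Require Import Reals.
Open Scope R_scope.

Record V4 := mkV4 { c1 : R; c2 : R; c3 : R; c4 : R }.

Definition vzero : V4 := mkV4 0 0 0 0.
Definition vadd (a b : V4) : V4 :=
  mkV4 (c1 a + c1 b) (c2 a + c2 b) (c3 a + c3 b) (c4 a + c4 b).
Definition vscale (k : R) (a : V4) : V4 :=
  mkV4 (k * c1 a) (k * c2 a) (k * c3 a) (k * c4 a).
Definition vdot (a b : V4) : R :=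
  c1 a * c1 b + c2 a * c2 b + c3 a * c3 b + c4 a * c4 b.

Definition det3 (a1 a2 a3 b1 b2 b3 d1 d2 d3 : R) : R :=
  a1 * (b2 * d3 - b3 * d2) - a2 * (b1 * d3 - b3 * d1) + a3 * (b1 * d2 - b2 * d1).

(* Four-dimensional vector product a (x) b (x) c, i.e. the formal determinant
   det [e1 e2 e3 e4; a; b; c] expanded along the first row. *)
Definition cross4 (a b c : V4) : V4 :=
  mkV4
    (  det3 (c2 a) (c3 a) (c4 a) (c2 b) (c3 b) (c4 b) (c2 c) (c3 c) (c4 c))
    (- det3 (c1 a) (c3 a) (c4 a) (c1 b) (c3 b) (c4 b) (c1 c) (c3 c) (c4 c))
    (  det3 (c1 a) (c2 a) (c4 a) (c1 b) (c2 b) (c4 b) (c1 c) (c2 c) (c4 c))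
    (- det3 (c1 a) (c2 a) (c3 a) (c1 b) (c2 b) (c3 b) (c1 c) (c2 c) (c3 c)).

Definition lin_indep3 (a b c : V4) : Prop :=
  forall al be ga : R,
    vadd (vscale al a) (vadd (vscale be b) (vscale ga c)) = vzero ->
    al = 0 /\ be = 0 /\ ga = 0.

Definition parallel (a b : V4) : Prop := exists k : R, b = vscale k a.

Definition vderiv (f : R -> V4) (x : R) (d : V4) : Prop :=
  derivable_pt_lim (fun y => c1 (f y)) x (c1 d) /\
  derivable_pt_lim (fun y => c2 (f y)) x (c2 d) /\
  derivable_pt_lim (fun y => c3 (f y)) x (c3 d) /\
  derivable_pt_lim (fun y => c4 (f y)) x (c4 d).

Definition inI (a b x : R) : Prop := a <= x <= b.

Definition frenet_curve (L1 L2 : R) (r T N B1 B2 : R -> V4) (k1 k2 k3 : R -> R)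
  : Prop :=
  forall s, inI L1 L2 s ->
    vdot (T s) (T s) = 1 /\ vdot (N s) (N s) = 1 /\
    vdot (B1 s) (B1 s) = 1 /\ vdot (B2 s) (B2 s) = 1 /\
    vdot (T s) (N s) = 0 /\ vdot (T s) (B1 s) = 0 /\ vdot (T s) (B2 s) = 0 /\
    vdot (N s) (B1 s) = 0 /\ vdot (N s) (B2 s) = 0 /\ vdot (B1 s) (B2 s) = 0 /\
    0 < k1 s /\
    vderiv r s (T s) /\
    vderiv T s (vscale (k1 s) (N s)) /\
    vderiv N s (vadd (vscale (- k1 s) (T s)) (vscale (k2 s) (B1 s))) /\
    vderiv B1 s (vadd (vscale (- k2 s) (N s)) (vscale (k3 s) (B2 s))) /\
    vderiv B2 s (vscale (- k3 s) (B1 s)).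

Definition Pmap (r T N B1 B2 : R -> V4) (u v w x : R -> R -> R -> R)
  (s t q : R) : V4 :=
  vadd (r s) (vadd (vscale (u s t q) (T s)) (vadd (vscale (v s t q) (N s))
    (vadd (vscale (w s t q) (B1 s)) (vscale (x s t q) (B2 s))))).

Definition isogeodesic (L1 L2 : R) (r N : R -> V4) (P : R -> R -> R -> V4)
  (t0 q0 : R) : Prop :=
  (forall s, inI L1 L2 s -> P s t0 q0 = r s) /\
  (forall s, inI L1 L2 s ->
     exists Ps Pt Pq : V4,
       vderiv (fun s' => P s' t0 q0) s Ps /\
       vderiv (fun t' => P s t' q0) t0 Pt /\
       vderiv (fun q' => P s t0 q') q0 Pq /\
       lin_indep3 Ps Pt Pq /\
       parallel (N s) (cross4 Ps Pt Pq)).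

Definition cont_on1 (a b : R) (f : R -> R) : Prop :=
  forall x, inI a b x -> forall eps, 0 < eps -> exists delta, 0 < delta /\
    forall y, inI a b y -> Rabs (y - x) < delta -> Rabs (f y - f x) < eps.

Definition cont_on2 (a b c d : R) (f : R -> R -> R) : Prop :=
  forall x y, inI a b x -> inI c d y -> forall eps, 0 < eps ->
    exists delta, 0 < delta /\
    forall x' y', inI a b x' -> inI c d y' ->
      Rabs (x' - x) < delta -> Rabs (y' - y) < delta ->
      Rabs (f x' y' - f x y) < eps.

Definition C1_on1 (a b : R) (f f' : R -> R) : Prop :=
  (forall x, inI a b x -> derivable_pt_lim f x (f' x)) /\ cont_on1 a b f'.

Definition C1_on2 (a b c d : R) (f fs ft : R -> R -> R) : Prop :=
  (forall x y, inI a b x -> inI c d y ->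
     derivable_pt_lim (fun x' => f x' y) x (fs x y) /\
     derivable_pt_lim (fun y' => f x y') y (ft x y)) /\
  cont_on2 a b c d fs /\ cont_on2 a b c d ft.

From Pilot Require Import Defs.
From Stdlib Require Import Reals.
Open Scope R_scope.
From Stdlib Require Import Lra Psatz.
(* Re-import so that the projections c1 .. c4 of V4 take precedence over the
   homonymous field of Stdlib's C1_fun. *)
Import Defs.

(* Write P(s,t,q) = r(s) + lU T + mV N + nW B1 + pX B2.  Because U and U'
   (resp. V and V') vanish at q0, the T- and N-parts of P and of its partial
   derivatives disappear at (s,t0,q0):
     P(s,t0,q0) = r(s) + nW B1 + pX B2,
     P_t = a B1 + b B2,  P_q = c B1 + d B2,
   with a = n_t W, b = p_t X, c = n W', d = p X', and, once nW = pX = 0,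
     P_s = T + n_s W B1 + p_s X B2.
   Hence "P(s,t0,q0) = r(s)" means nW = pX = 0; the three partials are
   independent iff ad - bc <> 0; and then their vector product is
   (ad - bc) (T (x) B1 (x) B2), which is automatically parallel to N: by the
   Lagrange and Gram identities C = T (x) B1 (x) B2 is a unit vector with
   (C.N)^2 = 1, so |C - (C.N) N|^2 = 0.
   The file proves these facts for general vectors and functions first, then
   the two directions of the theorem in a section carrying its hypotheses,
   and finally the theorem itself. *)

Lemma V4_ext (a b : V4) :
  c1 a = c1 b -> c2 a = c2 b -> c3 a = c3 b -> c4 a = c4 b -> a = b.
Proof. destruct a, b; simpl; intros; subst; reflexivity. Qed.

Lemma vdot_comm (a b : V4) : vdot a b = vdot b a.
Proof. unfold vdot; ring. Qed.

Lemma vdot_self_eq0 (z : V4) : vdot z z = 0 -> z = vzero.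
Proof.
  destruct z as [z1 z2 z3 z4]; unfold vdot, vzero; simpl; intro H.
  assert (z1 = 0) by nra; assert (z2 = 0) by nra;
  assert (z3 = 0) by nra; assert (z4 = 0) by nra.
  subst; reflexivity.
Qed.

Lemma vadd_cancel_l (a z : V4) : vadd a z = a -> z = vzero.
Proof.
  destruct a, z; unfold vadd, vzero; simpl; intro E; injection E; intros.
  apply V4_ext; simpl; lra.
Qed.

Definition fcomb (e1 e2 e3 : V4) (x y z : R) : V4 :=
  vadd (vscale x e1) (vadd (vscale y e2) (vscale z e3)).

Lemma fcomb_lincomb (e1 e2 e3 : V4) al be ga x y z x' y' z' x'' y'' z'' :
  vadd (vscale al (fcomb e1 e2 e3 x y z))
       (vadd (vscale be (fcomb e1 e2 e3 x' y' z')) (vscale ga (fcomb e1 e2 e3 x'' y'' z'')))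
  = fcomb e1 e2 e3 (al * x + be * x' + ga * x'') (al * y + be * y' + ga * y'')
                   (al * z + be * z' + ga * z'').
Proof. apply V4_ext; unfold fcomb, vadd, vscale; simpl; ring. Qed.

Lemma fcomb_zero (e1 e2 e3 : V4) : fcomb e1 e2 e3 0 0 0 = vzero.
Proof. apply V4_ext; unfold fcomb, vadd, vscale, vzero; simpl; ring. Qed.

Definition orthonormal3 (e1 e2 e3 : V4) : Prop :=
  vdot e1 e1 = 1 /\ vdot e2 e2 = 1 /\ vdot e3 e3 = 1 /\
  vdot e1 e2 = 0 /\ vdot e1 e3 = 0 /\ vdot e2 e3 = 0.

Lemma fcomb_eq0 (e1 e2 e3 : V4) x y z :
  orthonormal3 e1 e2 e3 -> fcomb e1 e2 e3 x y z = vzero -> x = 0 /\ y = 0 /\ z = 0.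
Proof.
  intros (H11 & H22 & H33 & H12 & H13 & H23) E.
  assert (Dot : forall e, vdot (fcomb e1 e2 e3 x y z) e
                          = x * vdot e1 e + y * vdot e2 e + z * vdot e3 e)
    by (intro e; unfold fcomb, vdot, vadd, vscale; simpl; ring).
  assert (Zero : forall e, vdot vzero e = 0) by (intro e; unfold vdot; simpl; ring).
  pose proof (Dot e1) as D1; pose proof (Dot e2) as D2; pose proof (Dot e3) as D3.
  rewrite E, Zero in D1, D2, D3.
  rewrite (vdot_comm e2 e1), (vdot_comm e3 e1), H11, H12, H13 in D1.
  rewrite (vdot_comm e3 e2), H12, H22, H23 in D2.
  rewrite H13, H23, H33 in D3.
  lra.
Qed.

Definition det4 (a1 a2 a3 a4 b1 b2 b3 b4 d1 d2 d3 d4 e1 e2 e3 e4 : R) : R :=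
  a1 * det3 b2 b3 b4 d2 d3 d4 e2 e3 e4 - a2 * det3 b1 b3 b4 d1 d3 d4 e1 e3 e4
  + a3 * det3 b1 b2 b4 d1 d2 d4 e1 e2 e4 - a4 * det3 b1 b2 b3 d1 d2 d3 e1 e2 e3.

Lemma lagrange_identity (a b c : V4) :
  vdot (cross4 a b c) (cross4 a b c) =
  det3 (vdot a a) (vdot a b) (vdot a c) (vdot b a) (vdot b b) (vdot b c)
       (vdot c a) (vdot c b) (vdot c c).
Proof. destruct a, b, c; unfold cross4, det3, vdot; simpl; ring. Qed.

(* (a (x) b (x) c) . d = det(a,b,c,d), whose square is the Gram determinant. *)
Lemma gram_identity (a b c d : V4) :
  vdot (cross4 a b c) d * vdot (cross4 a b c) d =
  det4 (vdot a a) (vdot a b) (vdot a c) (vdot a d)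
       (vdot b a) (vdot b b) (vdot b c) (vdot b d)
       (vdot c a) (vdot c b) (vdot c c) (vdot c d)
       (vdot d a) (vdot d b) (vdot d c) (vdot d d).
Proof. destruct a, b, c, d; unfold cross4, det4, det3, vdot; simpl; ring. Qed.

Lemma cross4_parallel_fourth (a b c d : V4) :
  orthonormal3 a b c -> vdot d d = 1 ->
  vdot a d = 0 -> vdot b d = 0 -> vdot c d = 0 -> parallel d (cross4 a b c).
Proof.
  intros Habc Hdd Had Hbd Hcd.
  pose proof Habc as (Haa & Hbb & Hcc & Hab & Hac & Hbc).
  set (C := cross4 a b c); set (k := vdot C d).
  assert (HCC : vdot C C = 1).
  { unfold C; rewrite lagrange_identity, (vdot_comm b a), (vdot_comm c a),
      (vdot_comm c b), Haa, Hbb, Hcc, Hab, Hac, Hbc; unfold det3; ring. }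
  assert (Hkk : k * k = 1).
  { unfold k, C; rewrite gram_identity, (vdot_comm b a), (vdot_comm c a),
      (vdot_comm c b), (vdot_comm d a), (vdot_comm d b), (vdot_comm d c),
      Haa, Hbb, Hcc, Hdd, Hab, Hac, Hbc, Had, Hbd, Hcd; unfold det4, det3; ring. }
  assert (Hexp : vdot (vadd C (vscale (- k) d)) (vadd C (vscale (- k) d))
                 = vdot C C - 2 * k * vdot C d + k * k * vdot d d)
    by (unfold vdot, vadd, vscale; simpl; ring).
  rewrite HCC, Hdd in Hexp; fold k in Hexp.
  exists k.
  assert (Z : vadd C (vscale (- k) d) = vzero)
    by (apply vdot_self_eq0; rewrite Hexp; lra).
  apply V4_ext;
  [ apply (f_equal c1) in Z | apply (f_equal c2) in Z
  | apply (f_equal c3) in Z | apply (f_equal c4) in Z ];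
  unfold vadd, vscale, vzero in Z; simpl in Z |- *; lra.
Qed.

(* Multilinearity and alternation of (x) on combinations of e1, e2, e3. *)
Lemma cross4_fcomb (e1 e2 e3 : V4) A B a b c d :
  cross4 (fcomb e1 e2 e3 1 A B) (fcomb e1 e2 e3 0 a b) (fcomb e1 e2 e3 0 c d)
  = vscale (a * d - b * c) (cross4 e1 e2 e3).
Proof.
  destruct e1, e2, e3; unfold cross4, det3, fcomb, vadd, vscale; simpl; f_equal; ring.
Qed.

Lemma singular2_kernel a b c d :
  a * d - b * c = 0 ->
  exists be ga, (be <> 0 \/ ga <> 0) /\ be * a + ga * c = 0 /\ be * b + ga * d = 0.
Proof.
  intro Hdet.
  destruct (Req_dec a 0) as [Ha | Ha]; [destruct (Req_dec c 0) as [Hc | Hc] |].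
  - destruct (Req_dec b 0) as [Hb | Hb].
    + exists 1, 0; repeat split; [left |..]; lra.
    + exists d, (- b); repeat split; [right |..]; lra.
  - exists c, (- a); repeat split; [left |..]; lra.
  - exists c, (- a); repeat split; [right |..]; lra.
Qed.

Lemma regular2_kernel a b c d be ga :
  a * d - b * c <> 0 -> be * a + ga * c = 0 -> be * b + ga * d = 0 ->
  be = 0 /\ ga = 0.
Proof.
  intros Hdet E1 E2.
  assert (Hbe : be * (a * d - b * c) = d * (be * a + ga * c) - c * (be * b + ga * d))
    by ring.
  assert (Hga : ga * (a * d - b * c) = a * (be * b + ga * d) - b * (be * a + ga * c))
    by ring.
  rewrite E1, E2, Rmult_0_r, Rmult_0_r, Rminus_0_r in Hbe, Hga.
  apply Rmult_integral in Hbe, Hga; tauto.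
Qed.

Lemma fcomb_lin_indep_iff (e1 e2 e3 : V4) A B a b c d :
  orthonormal3 e1 e2 e3 ->
  (lin_indep3 (fcomb e1 e2 e3 1 A B) (fcomb e1 e2 e3 0 a b) (fcomb e1 e2 e3 0 c d)
   <-> a * d - b * c <> 0).
Proof.
  intro Hortho; split.
  - intros Hind Hdet.
    destruct (singular2_kernel a b c d Hdet) as (be & ga & Hnz & E1 & E2).
    destruct (Hind 0 be ga) as (_ & Hbe & Hga); [| lra].
    rewrite fcomb_lincomb, <- (fcomb_zero e1 e2 e3); f_equal; lra.
  - intros Hdet al be ga E.
    rewrite fcomb_lincomb in E.
    destruct (fcomb_eq0 _ _ _ _ _ _ Hortho E) as (Hal & E1 & E2).
    assert (al = 0) by lra; subst al.
    destruct (regular2_kernel a b c d be ga Hdet) as [Hbe Hga]; lra.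
Qed.

Lemma vderiv_eq (f : R -> V4) y d d' : vderiv f y d -> d = d' -> vderiv f y d'.
Proof. intros; subst; assumption. Qed.

Lemma vderiv_unique (f : R -> V4) y d d' : vderiv f y d -> vderiv f y d' -> d = d'.
Proof.
  intros (F1 & F2 & F3 & F4) (G1 & G2 & G3 & G4).
  apply V4_ext; eapply uniqueness_limite; eassumption.
Qed.

Lemma vderiv_const (a : V4) y : vderiv (fun _ => a) y vzero.
Proof. repeat split; apply derivable_pt_lim_const. Qed.

Lemma vderiv_add (f g : R -> V4) y df dg :
  vderiv f y df -> vderiv g y dg -> vderiv (fun z => vadd (f z) (g z)) y (vadd df dg).
Proof.
  intros (F1 & F2 & F3 & F4) (G1 & G2 & G3 & G4).
  repeat split; apply derivable_pt_lim_plus; assumption.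
Qed.

Lemma dlim_mult (f g : R -> R) y df dg :
  derivable_pt_lim f y df -> derivable_pt_lim g y dg ->
  derivable_pt_lim (fun z => f z * g z) y (df * g y + f y * dg).
Proof. exact (derivable_pt_lim_mult f g y df dg). Qed.

Lemma vderiv_scale (g : R -> R) (h : R -> V4) y dg dh :
  derivable_pt_lim g y dg -> vderiv h y dh ->
  vderiv (fun z => vscale (g z) (h z)) y (vadd (vscale dg (h y)) (vscale (g y) dh)).
Proof.
  intros Hg (F1 & F2 & F3 & F4).
  unfold vadd, vscale; simpl; repeat split; apply dlim_mult; assumption.
Qed.

Lemma vderiv_frame_expansion (a e1 e2 e3 e4 : R -> V4) (f1 f2 f3 f4 : R -> R)
    y da de1 de2 de3 de4 d1 d2 d3 d4 :
  vderiv a y da -> vderiv e1 y de1 -> vderiv e2 y de2 ->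
  vderiv e3 y de3 -> vderiv e4 y de4 ->
  derivable_pt_lim f1 y d1 -> derivable_pt_lim f2 y d2 ->
  derivable_pt_lim f3 y d3 -> derivable_pt_lim f4 y d4 ->
  vderiv (fun z => vadd (a z) (vadd (vscale (f1 z) (e1 z)) (vadd (vscale (f2 z) (e2 z))
                     (vadd (vscale (f3 z) (e3 z)) (vscale (f4 z) (e4 z)))))) y
    (vadd da (vadd (vadd (vscale d1 (e1 y)) (vscale (f1 y) de1))
             (vadd (vadd (vscale d2 (e2 y)) (vscale (f2 y) de2))
             (vadd (vadd (vscale d3 (e3 y)) (vscale (f3 y) de3))
                   (vadd (vscale d4 (e4 y)) (vscale (f4 y) de4)))))).
Proof.
  intros.
  repeat (apply vderiv_add || apply vderiv_scale); assumption.
Qed.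

Lemma frenet_orthonormal L1 L2 (r T N B1 B2 : R -> V4) (k1 k2 k3 : R -> R) s :
  frenet_curve L1 L2 r T N B1 B2 k1 k2 k3 -> inI L1 L2 s ->
  orthonormal3 (T s) (B1 s) (B2 s) /\ vdot (N s) (N s) = 1 /\
  vdot (T s) (N s) = 0 /\ vdot (B1 s) (N s) = 0 /\ vdot (B2 s) (N s) = 0.
Proof.
  intros Hframe Hs.
  destruct (Hframe s Hs) as (tt & nn & bb1 & bb2 & tn & tb1 & tb2 & nb1 & nb2 & b1b2 & _).
  rewrite (vdot_comm (B1 s)), (vdot_comm (B2 s)).
  repeat split; assumption.
Qed.

Section Separable.

Variables (L1 L2 T1 T2 Q1 Q2 t0 q0 : R)
  (r T N B1 B2 : R -> V4) (k1 k2 k3 : R -> R)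
  (l m n p ls lt ms mt ns nt ps pt : R -> R -> R)
  (U V W X U' V' W' X' : R -> R).

Hypotheses (Hframe : frenet_curve L1 L2 r T N B1 B2 k1 k2 k3)
  (Ht0 : inI T1 T2 t0) (Hq0 : inI Q1 Q2 q0)
  (Hl : C1_on2 L1 L2 T1 T2 l ls lt) (Hm : C1_on2 L1 L2 T1 T2 m ms mt)
  (Hn : C1_on2 L1 L2 T1 T2 n ns nt) (Hp : C1_on2 L1 L2 T1 T2 p ps pt)
  (HU : C1_on1 Q1 Q2 U U') (HV : C1_on1 Q1 Q2 V V')
  (HW : C1_on1 Q1 Q2 W W') (HX : C1_on1 Q1 Q2 X X')
  (HU0 : U q0 = 0) (HU'0 : U' q0 = 0) (HV0 : V q0 = 0) (HV'0 : V' q0 = 0).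

Let P : R -> R -> R -> V4 :=
  Pmap r T N B1 B2 (fun s t q => l s t * U q) (fun s t q => m s t * V q)
    (fun s t q => n s t * W q) (fun s t q => p s t * X q).

Let frame_comb (s : R) : R -> R -> R -> V4 := fcomb (T s) (B1 s) (B2 s).

Let frame_orthonormal_at s (Hs : inI L1 L2 s) :=
  frenet_orthonormal L1 L2 r T N B1 B2 k1 k2 k3 s Hframe Hs.

Ltac frame_coeffs :=
  apply V4_ext; unfold frame_comb, fcomb, vadd, vscale, vzero; simpl;
  rewrite ?HU0, ?HU'0, ?HV0, ?HV'0; ring.

Ltac frame_derivs :=
  apply vderiv_frame_expansion;
  first [ apply vderiv_const | eassumption
        | apply dlim_mult; first [eassumption | apply derivable_pt_lim_const] ].

Lemma P_at_q0 s t :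
  P s t q0 = vadd (r s) (frame_comb s 0 (n s t * W q0) (p s t * X q0)).
Proof. unfold P, Pmap; f_equal; frame_coeffs. Qed.

Lemma P_through_curve s :
  inI L1 L2 s -> (P s t0 q0 = r s <-> n s t0 * W q0 = 0 /\ p s t0 * X q0 = 0).
Proof.
  intro Hs; rewrite P_at_q0; split.
  - intro Hr; apply vadd_cancel_l in Hr.
    destruct (fcomb_eq0 _ _ _ _ _ _ (proj1 (frame_orthonormal_at s Hs)) Hr)
      as (_ & HnW & HpX); split; assumption.
  - intros [-> ->]; unfold frame_comb; rewrite fcomb_zero.
    apply V4_ext; unfold vadd, vzero; simpl; ring.
Qed.

Lemma P_partial_t s :
  inI L1 L2 s ->
  vderiv (fun t => P s t q0) t0 (frame_comb s 0 (nt s t0 * W q0) (pt s t0 * X q0)).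
Proof.
  intro Hs.
  destruct (proj1 Hl s t0 Hs Ht0) as [_ Dl]; destruct (proj1 Hm s t0 Hs Ht0) as [_ Dm].
  destruct (proj1 Hn s t0 Hs Ht0) as [_ Dn]; destruct (proj1 Hp s t0 Hs Ht0) as [_ Dp].
  eapply vderiv_eq; [unfold P, Pmap; frame_derivs | frame_coeffs].
Qed.

Lemma P_partial_q s :
  vderiv (fun q => P s t0 q) q0 (frame_comb s 0 (n s t0 * W' q0) (p s t0 * X' q0)).
Proof.
  pose proof (proj1 HU q0 Hq0); pose proof (proj1 HV q0 Hq0).
  pose proof (proj1 HW q0 Hq0); pose proof (proj1 HX q0 Hq0).
  eapply vderiv_eq; [unfold P, Pmap; frame_derivs | frame_coeffs].
Qed.

(* Where all coefficients vanish, the motion of the frame does not contribute. *)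
Lemma P_partial_s s :
  inI L1 L2 s -> n s t0 * W q0 = 0 -> p s t0 * X q0 = 0 ->
  vderiv (fun s' => P s' t0 q0) s (frame_comb s 1 (ns s t0 * W q0) (ps s t0 * X q0)).
Proof.
  intros Hs HnW HpX.
  destruct (Hframe s Hs)
    as (_ & _ & _ & _ & _ & _ & _ & _ & _ & _ & _ & dr & dT & dN & dB1 & dB2).
  destruct (proj1 Hl s t0 Hs Ht0) as [Dl _]; destruct (proj1 Hm s t0 Hs Ht0) as [Dm _].
  destruct (proj1 Hn s t0 Hs Ht0) as [Dn _]; destruct (proj1 Hp s t0 Hs Ht0) as [Dp _].
  eapply vderiv_eq; [unfold P, Pmap; frame_derivs |].
  apply V4_ext; unfold frame_comb, fcomb, vadd, vscale, vzero; simpl;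
  rewrite ?HU0, ?HV0, ?HnW, ?HpX; ring.
Qed.

Lemma isogeodesic_necessary :
  isogeodesic L1 L2 r N P t0 q0 ->
  forall s, inI L1 L2 s ->
    n s t0 * W q0 = 0 /\ p s t0 * X q0 = 0 /\
    nt s t0 * W q0 * p s t0 * X' q0 - n s t0 * W' q0 * pt s t0 * X q0 <> 0.
Proof.
  intros [Hthrough Hregular] s Hs.
  destruct (proj1 (P_through_curve s Hs) (Hthrough s Hs)) as [HnW HpX].
  repeat split; try assumption.
  destruct (Hregular s Hs) as (Ps & Pt & Pq & DPs & DPt & DPq & Hind & _).
  rewrite (vderiv_unique _ _ _ _ DPs (P_partial_s s Hs HnW HpX)),
    (vderiv_unique _ _ _ _ DPt (P_partial_t s Hs)),
    (vderiv_unique _ _ _ _ DPq (P_partial_q s)) in Hind.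
  apply fcomb_lin_indep_iff in Hind;
    [| exact (proj1 (frame_orthonormal_at s Hs))].
  intro Hdet; apply Hind; rewrite <- Hdet; ring.
Qed.

(* Sufficiency: the partials are independent, and their vector product is a
   multiple of T (x) B1 (x) B2, hence of N. *)
Lemma isogeodesic_sufficient :
  (forall s, inI L1 L2 s ->
     n s t0 * W q0 = 0 /\ p s t0 * X q0 = 0 /\
     nt s t0 * W q0 * p s t0 * X' q0 - n s t0 * W' q0 * pt s t0 * X q0 <> 0) ->
  isogeodesic L1 L2 r N P t0 q0.
Proof.
  intro H; split; intros s Hs; destruct (H s Hs) as (HnW & HpX & Hdet).
  - apply P_through_curve; tauto.
  - destruct (frame_orthonormal_at s Hs) as (Hortho & Hnn & Htn & Hb1n & Hb2n).
    eexists _, _, _; split; [exact (P_partial_s s Hs HnW HpX) |].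
    split; [exact (P_partial_t s Hs) |]; split; [exact (P_partial_q s) |].
    unfold frame_comb; split.
    + apply fcomb_lin_indep_iff; [exact Hortho |].
      intro E0; apply Hdet; rewrite <- E0; ring.
    + rewrite cross4_fcomb.
      destruct (cross4_parallel_fourth _ _ _ _ Hortho Hnn Htn Hb1n Hb2n) as [k Hk].
      exists ((nt s t0 * W q0 * (p s t0 * X' q0) - pt s t0 * X q0 * (n s t0 * W' q0)) * k).
      rewrite Hk; apply V4_ext; unfold vscale; simpl; ring.
Qed.

End Separable.

Theorem mainTheorem3
  (L1 L2 T1 T2 Q1 Q2 t0 q0 : R)
  (r T N B1 B2 : R -> V4) (k1 k2 k3 : R -> R)
  (l m n p ls lt ms mt ns nt ps pt : R -> R -> R)
  (U V W X U' V' W' X' : R -> R)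
  (Hframe : frenet_curve L1 L2 r T N B1 B2 k1 k2 k3)
  (Ht0 : inI T1 T2 t0) (Hq0 : inI Q1 Q2 q0)
  (Hl : C1_on2 L1 L2 T1 T2 l ls lt) (Hm : C1_on2 L1 L2 T1 T2 m ms mt)
  (Hn : C1_on2 L1 L2 T1 T2 n ns nt) (Hp : C1_on2 L1 L2 T1 T2 p ps pt)
  (HU : C1_on1 Q1 Q2 U U') (HV : C1_on1 Q1 Q2 V V')
  (HW : C1_on1 Q1 Q2 W W') (HX : C1_on1 Q1 Q2 X X')
  (HU0 : U q0 = 0) (HU'0 : U' q0 = 0) (HV0 : V q0 = 0) (HV'0 : V' q0 = 0) :
  isogeodesic L1 L2 r N
    (Pmap r T N B1 B2
       (fun s t q => l s t * U q) (fun s t q => m s t * V q)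
       (fun s t q => n s t * W q) (fun s t q => p s t * X q))
    t0 q0
  <->
  (forall s, inI L1 L2 s ->
     n s t0 * W q0 = 0 /\ p s t0 * X q0 = 0 /\
     nt s t0 * W q0 * p s t0 * X' q0 - n s t0 * W' q0 * pt s t0 * X q0 <> 0).
Proof.
  split.
  - eapply isogeodesic_necessary; eassumption.
  - eapply isogeodesic_sufficient; eassumption.
Qed.
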